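(* Let $\theta>1$, $r\in(\theta^{-1},\theta^{-1/2}]$ and $s=\max\big(1,\frac{\ln\theta}{\ln(r\theta)}-2\big)$. Suppose the random price sequence has maximum $P^*=p^*$ almost surely for a fixed $p^*\in[1,\theta]$, and let $Y$ be a random prediction with values in $[1,\theta]$. Then \[ \frac{\mathbb{E}[\mathsf{A}^1_r(P,Y)]}{\mathbb{E}[P^*]}\ \ge\ \frac{1}{r\theta}\,\Lambda(p^* ),\qquad \Lambda(p^* ):=\mathbb{E}\big[\mathcal{E}(p^*,Y)^{s}\big]. \]
   Context: One-max search: fix $\theta>1$. Prices $p_1,\dots,p_n\in[1,\theta]$ are revealed one at a time; the algorithm receives at the start a prediction $y\in[1,\theta]$ of the maximum price. At each step it irrevocably accepts the current price (payoff = that price) or rejects it; if nothing is accepted the payoff is $1$. Let $\varphi_r(z)=\frac{r\theta-1}{1-r}+\frac{1-r^2\theta}{1-r}\cdot\frac{z}{r\theta}$ and $\Phi^1_r(z)=\max(r\theta,\varphi_r(z))$; $\mathsf{A}^1_r$ accepts the first price $p_i\ge\Phi^1_r(y)$, and $\mathsf{A}^1_r(P,Y)$ is its payoff on the realized (random) prices and prediction. $\mathcal{E}(a,b)=\min\{a/b,b/a\}$. *)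

From HB Require Import structures.
From mathcomp Require Import all_boot all_order all_algebra.
From mathcomp Require Import all_classical all_reals all_analysis.
Set Implicit Arguments. Unset Strict Implicit. Unset Printing Implicit Defensive.
Import Order.TTheory GRing.Theory Num.Theory.
Import numFieldNormedType.Exports.
Local Open Scope ring_scope.

Section OneMax.
Variable R : realType.

Definition varphi (theta r z : R) : R :=
  (r * theta - 1) / (1 - r) + (1 - r ^+ 2 * theta) / (1 - r) * (z / (r * theta)).

Definition Phi1 (theta r z : R) : R := Num.max (r * theta) (varphi theta r z).

Fixpoint threshold_payoff (thr : R) (s : seq R) : R :=
  match s with
  | [::] => 1
  | x :: s' => if thr <= x then x else threshold_payoff thr s'
  end.

Definition A1 (theta r : R) (n : nat) (p : 'I_n -> R) (y : R) : R :=
  threshold_payoff (Phi1 theta r y) [seq p i | i <- enum 'I_n].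

(* maximum price P^* = max_i p_i (the default 1 is irrelevant for n >= 1 and
   prices in [1, theta]) *)
Definition maxprice (n : nat) (p : 'I_n -> R) : R := \big[Num.max/1]_(i < n) p i.

Definition calE (a b : R) : R := Num.min (a / b) (b / a).

Definition sexp (theta r : R) : R := Num.max 1 (ln theta / ln (r * theta) - 2).

End OneMax.

From HB Require Import structures.
From mathcomp Require Import all_boot all_order all_algebra.
From mathcomp Require Import all_classical all_reals all_analysis.
From mathcomp Require Import measurable_realfun.
From mathcomp Require Import ring lra.
Set Implicit Arguments.
Unset Strict Implicit.
Unset Printing Implicit Defensive.
Import Order.TTheory GRing.Theory Num.Theory.
Import numFieldNormedType.Exports.
Local Open Scope ring_scope.

(* Write p for the almost surely constant maximum price, y for the prediction
   and a = r theta.  Pointwise, if the threshold Phi1(y) is reached the payoff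
   is at least varphi(y) >= y / a >= (p / a) E(p, y)^s.  Otherwise the payoff
   is 1, which suffices when p <= a; when a < p < varphi(y), rejection forces
   p < y, and in the units u = p / a, v = y / a, B = theta / a^2 it reads
   1 + (u - 1)(a B - 1)/(B - 1) <= v.  The choice of s gives B <= a^s, so the
   chord bound for the convex map x |-> x^(1 + 1/s) on [1, B] yields
   u^(1 + 1/s) <= v, i.e. p (p / y)^s <= a.  Integrating this bound over the
   prediction and dividing by E[P*] = p gives the corollary. *)

Section ThresholdRule.
Context {R : realType} {n : nat}.

Lemma threshold_payoff_mem (thr : R) xs : threshold_payoff thr xs \in 1 :: xs.
Proof.
elim: xs => [|x xs IH] /=; first by rewrite mem_head.
case: ifP => _; first by rewrite !in_cons eqxx orbT.
by move: IH; rewrite !in_cons => /orP[->|->]; rewrite ?orbT.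
Qed.

Lemma threshold_payoff_ge (thr : R) xs : has (fun x => thr <= x) xs ->
  thr <= threshold_payoff thr xs.
Proof. by elim: xs => //= x xs IH; case: ifP => [-> //|_ /IH]. Qed.

Lemma threshold_payoff_1 (thr : R) xs : all (fun x => x < thr) xs ->
  threshold_payoff thr xs = 1.
Proof. by elim: xs => //= x xs IH /andP[xt /IH ->]; rewrite leNgt xt. Qed.

Lemma maxprice_ge1 (p : 'I_n -> R) : 1 <= maxprice p.
Proof.
by rewrite /maxprice; elim/big_rec: _ => // i x _ x1; rewrite le_max x1 orbT.
Qed.

Lemma le_maxprice (p : 'I_n -> R) i : p i <= maxprice p.
Proof. by rewrite /maxprice (bigD1 i) //= le_max lexx. Qed.

Lemma maxprice_lt (p : 'I_n -> R) c : 1 < c -> (forall i, p i < c) ->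
  maxprice p < c.
Proof.
move=> c1 pc; apply: (big_ind (fun x => x < c)) => // x y.
by rewrite gt_max => -> ->.
Qed.

Lemma A1_ge_Phi1 (theta r : R) (p : 'I_n -> R) y : 1 < Phi1 theta r y ->
  Phi1 theta r y <= maxprice p -> Phi1 theta r y <= A1 theta r p y.
Proof.
move=> Phi1_gt1 Phi1_le; apply: threshold_payoff_ge.
apply: contraTT Phi1_le => /hasPn lt_Phi1; rewrite -ltNge.
apply: maxprice_lt => // i; rewrite ltNge; apply: lt_Phi1.
by apply: map_f; rewrite mem_enum.
Qed.

Lemma A1_eq1 (theta r : R) (p : 'I_n -> R) y :
  maxprice p < Phi1 theta r y -> A1 theta r p y = 1.
Proof.
move=> lt_Phi1; apply: threshold_payoff_1; apply/allP => _ /mapP[i _ ->].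
exact: le_lt_trans (le_maxprice p i) lt_Phi1.
Qed.

Lemma A1_in_itv (theta r : R) (p : 'I_n -> R) y lo hi : lo <= 1 <= hi ->
  (forall i, lo <= p i <= hi) -> lo <= A1 theta r p y <= hi.
Proof.
move=> lo_hi p_bd; rewrite /A1.
by case/predU1P: (threshold_payoff_mem (Phi1 theta r y) [seq p i | i <- enum 'I_n])
  => [->|/mapP[i _ ->]].
Qed.

End ThresholdRule.

Section Efficiency.
Context {R : realType}.
Implicit Types p y e : R.

Lemma calE_gt0 p y : 0 < p -> 0 < y -> 0 < calE p y.
Proof. by move=> p0 y0; rewrite lt_min !divr_gt0. Qed.

Lemma calE_le1 p y : 0 < p -> 0 < y -> calE p y <= 1.
Proof. by move=> p0 y0; rewrite ge_min !ler_pdivrMr // !mul1r le_total. Qed.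

Lemma mul_calE_le p y : 0 < p -> 0 < y -> p * calE p y <= y.
Proof. by move=> p0 y0; rewrite mulrC -ler_pdivlMr // ge_min lexx orbT. Qed.

Lemma calE_lt p y : 0 < p -> p < y -> calE p y = p / y.
Proof.
move=> p0 py; apply/min_idPl.
by rewrite ler_pdivrMr ?(lt_trans p0 py) // mulrAC ler_pdivlMr //; nra.
Qed.

Lemma calE_powR_le p y e : 0 < p -> 0 < y -> 1 <= e -> calE p y `^ e <= calE p y.
Proof. by move=> p0 y0 e1; apply: ge1r_powR => //; rewrite calE_gt0 ?calE_le1. Qed.

Lemma calE_powR_itv p y e : 0 < p -> 0 < y -> 1 <= e -> 0 <= calE p y `^ e <= 1.
Proof.
move=> p0 y0 e1; rewrite powR_ge0 /=.
exact: le_trans (calE_powR_le p0 y0 e1) (calE_le1 p0 y0).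
Qed.

End Efficiency.

Section Convexity.
Context {R : realType}.

Lemma powR_le_chord (q B x : R) : 1 <= q -> 1 < B -> 1 <= x <= B ->
  x `^ q <= 1 + (x - 1) / (B - 1) * (B `^ q - 1).
Proof.
move=> q1 B1 /andP[x1 xB].
have t0 : 0 <= (x - 1) / (B - 1) by apply: divr_ge0; lra.
have t1 : (x - 1) / (B - 1) <= 1 by rewrite ler_pdivrMr; lra.
have := @convex_powR R q q1 (Itv01 t0 t1) B 1.
rewrite !inE /= !in_itv /= !andbT => /(_ (ltW (lt_trans ltr01 B1)) ler01).
rewrite convRE /= /unstable.onem powR1 => chord.
have x_conv : (x - 1) / (B - 1) * B + (1 - (x - 1) / (B - 1)) * 1 = x.
  by field; rewrite subr_eq0 gt_eqF.
rewrite -{1}x_conv; apply: le_trans chord _; lra.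
Qed.

Lemma powR_add_inv_le (a B e : R) : 0 <= a -> 0 < e -> 1 <= B -> B <= a `^ e ->
  B `^ (1 + e^-1) <= a * B.
Proof.
move=> a0 e0 B1 Ba; have B0 : 0 < B by lra.
rewrite powRD ?(gt_eqF B0) ?implybT // powRr1 ?(ltW B0) //.
rewrite [a * B]mulrC ler_pM2l //.
have einv_ge0 : 0 <= e^-1 by rewrite invr_ge0 ltW.
have := @ge0_ler_powR R e^-1 einv_ge0 B (a `^ e).
rewrite !nnegrE => /(_ (ltW B0) (powR_ge0 _ _) Ba).
by rewrite -powRrM divff ?gt_eqF // powRr1.
Qed.

Lemma powR_succ_le (a B u v e : R) : 0 <= a -> 0 < e -> 1 < B -> B <= a `^ e ->
  1 <= u <= B -> 1 + (u - 1) / (B - 1) * (a * B - 1) <= v ->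
  u `^ (e + 1) <= v `^ e.
Proof.
move=> a0 e0 B1 Ba uB uv; have /andP[u1 _] := uB.
have q1 : 1 <= 1 + e^-1 by rewrite lerDl invr_ge0 ltW.
have chord := powR_le_chord q1 B1 uB.
have Bq := powR_add_inv_le a0 e0 (ltW B1) Ba.
have uqv : u `^ (1 + e^-1) <= v.
  have t0 : 0 <= (u - 1) / (B - 1) by apply: divr_ge0; lra.
  have := ler_wpM2l t0 (lerB Bq (lexx 1)); lra.
have -> : e + 1 = (1 + e^-1) * e by rewrite mulrDl mul1r mulVf ?gt_eqF // addrC.
have v_ge0 : 0 <= v by apply: le_trans uqv; exact: powR_ge0.
by rewrite powRrM; apply: ge0_ler_powR; rewrite ?nnegrE ?powR_ge0 ?v_ge0 // ltW.
Qed.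

Lemma mul_powR_div_le (a u v e : R) : 0 < a -> 0 < u -> 0 < v ->
  u `^ (e + 1) <= v `^ e -> a * u * (u / v) `^ e <= a.
Proof.
move=> a0 u0 v0; rewrite powRD ?(gt_eqF u0) ?implybT // powRr1 ?(ltW u0) // => uv.
have ve_gt0 : 0 < v `^ e by rewrite powR_gt0.
rewrite -(ler_pM2r ve_gt0) -!mulrA -powRM ?divr_ge0 ?(ltW u0) ?(ltW v0) //.
by rewrite divfK ?gt_eqF // ler_pM2l // mulrC.
Qed.

End Convexity.

Lemma sexp_ge1 {R : realType} (theta r : R) : 1 <= sexp theta r.
Proof. by rewrite le_max lexx. Qed.

Section CompetitiveRatio.
Context {R : realType} (theta r : R).
Hypotheses (theta_gt1 : 1 < theta) (r_gt : theta^-1 < r)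
  (r_le : r <= theta `^ (- 2^-1)).
Local Notation a := (r * theta).
Local Notation s := (sexp theta r).

Let theta_gt0 : 0 < theta. Proof. exact: lt_trans ltr01 theta_gt1. Qed.

Lemma rtheta_gt1 : 1 < a.
Proof. by rewrite -(mulVf (lt0r_neq0 theta_gt0)) ltr_pM2r. Qed.

Let r_gt0 : 0 < r.
Proof. by rewrite -(ltr_pM2r theta_gt0) mul0r; apply: lt_trans rtheta_gt1. Qed.

Let sqr_r_theta_le1 : r * r * theta <= 1.
Proof.
have theta_ge0 := ltW theta_gt0.
move: r_le; rewrite powRN powR12_sqrt // => r_le'.
have sqrt_gt0 : 0 < Num.sqrt theta by rewrite sqrtr_gt0.
have -> : r * r * theta = (r * Num.sqrt theta) ^+ 2.
  by rewrite exprMn sqr_sqrtr // expr2.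
by apply: exprn_ile1; [rewrite mulr_ge0 // ltW | rewrite -ler_pdivlMr // div1r].
Qed.

Lemma sqr_rtheta_le : a * a <= theta.
Proof. by have := ler_wpM2r (ltW theta_gt0) sqr_r_theta_le1; rewrite mul1r; nra. Qed.

Lemma rtheta_lt : a < theta.
Proof.
have r_lt1 : r < 1 by have := sqr_r_theta_le1; have := rtheta_gt1; nra.
by rewrite gtr_pMl.
Qed.

Lemma theta_le_powR_sexp : theta <= a `^ (s + 2).
Proof.
have ln_a : 0 < ln a by rewrite ln_gt0 ?rtheta_gt1.
rewrite /powR gt_eqF ?(lt_trans ltr01 rtheta_gt1) //.
rewrite -[leLHS]lnK ?posrE // ler_expR -ler_pdivrMr //.
have : ln theta / ln a - 2 <= s by rewrite le_max lexx orbT.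
lra.
Qed.

Lemma varphiE y : varphi theta r y =
  a + (theta - a * a) / (a * (theta - a)) * (y - a).
Proof.
have := rtheta_lt; have := rtheta_gt1 => a1 ath.
rewrite /varphi; field.
by rewrite !subr_eq0 !gt_eqF ?(lt_trans ltr01 a1) //; nra.
Qed.

Lemma div_rtheta_le_varphi y : y <= theta -> y / a <= varphi theta r y.
Proof.
move=> y_le; have := rtheta_lt; have := rtheta_gt1 => a1 ath.
rewrite ler_pdivrMr ?(lt_trans ltr01 a1) // varphiE.
have -> : (a + (theta - a * a) / (a * (theta - a)) * (y - a)) * a =
    y + a * (a - 1) * (theta - y) / (theta - a).
  by field; rewrite !subr_eq0 !gt_eqF ?(lt_trans ltr01 a1).
by rewrite lerDl; apply: divr_ge0; [apply: mulr_ge0; [apply: mulr_ge0|]|]; lra.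
Qed.

Lemma lt_varphi_cross p y : p < varphi theta r y ->
  (p - a) * a * (theta - a) < (theta - a * a) * (y - a).
Proof.
have := rtheta_lt; have := rtheta_gt1 => a1 ath.
rewrite varphiE -ltrBlDl mulrAC ltr_pdivlMr ?mulrA //.
by rewrite mulr_gt0 ?subr_gt0 // (lt_trans ltr01 a1).
Qed.

Lemma rejected_price_lt p y : a < p -> p < varphi theta r y -> p < y.
Proof.
move=> ap /lt_varphi_cross key; have := rtheta_lt; have := rtheta_gt1 => a1 ath.
rewrite ltNge; apply/negP => yp.
have : (theta - a * a) * (y - a) <= (theta - a * a) * (p - a).
  by rewrite ler_wpM2l ?lerD2r // subr_ge0 sqr_rtheta_le.
have : 0 <= (p - a) * (a - 1) * theta by apply: mulr_ge0; [apply: mulr_ge0|]; lra.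
lra.
Qed.

Lemma rejected_sqr_rtheta_lt p y : a < p -> p < varphi theta r y -> a * a < theta.
Proof.
move=> ap /lt_varphi_cross key; have ath := rtheta_lt.
rewrite lt_neqAle sqr_rtheta_le andbT; apply/negP => /eqP aa_eq.
have : 0 < (p - a) * a * (theta - a).
  by rewrite !mulr_gt0 ?subr_gt0 // (lt_trans ltr01 rtheta_gt1).
by move: key; rewrite aa_eq subrr mul0r; lra.
Qed.

Lemma rejected_mul_rtheta_lt p y : p < varphi theta r y -> y <= theta -> p * a < theta.
Proof.
move=> /lt_varphi_cross key yth; have ath := rtheta_lt.
have y_le : (theta - a * a) * (y - a) <= (theta - a * a) * (theta - a).
  by rewrite ler_wpM2l ?lerD2r // subr_ge0 sqr_rtheta_le.
have ath' : 0 < theta - a by rewrite subr_gt0.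
have : (p - a) * a < theta - a * a by rewrite -(ltr_pM2r ath'); lra.
lra.
Qed.

Lemma rejected_price_bound p y : a < p -> p < varphi theta r y -> y <= theta ->
  p * (p / y) `^ s <= a.
Proof.
move=> ap p_lt yth; have key := lt_varphi_cross p_lt.
have aa_lt := rejected_sqr_rtheta_lt ap p_lt.
have pa_lt := rejected_mul_rtheta_lt p_lt yth.
have ya := lt_trans ap (rejected_price_lt ap p_lt).
have a0 : 0 < a := lt_trans ltr01 rtheta_gt1.
have ra_lt : r * a < 1.
  have -> : r * a = a * a / theta by field; rewrite gt_eqF.
  by rewrite ltr_pdivrMr // mul1r.
pose u := p / a; pose v := y / a; pose B := theta / (a * a).
have B1 : 1 < B by rewrite ltr_pdivlMr ?mul1r ?mulr_gt0.
have uB : 1 <= u <= B.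
  rewrite ler_pdivlMr // mul1r ler_pdivrMr // mulrAC ler_pdivlMr ?mulr_gt0 //.
  by rewrite (ltW ap) [p * _]mulrA ler_pM2r // ltW.
have Ba : B <= a `^ s.
  have a_pow : a `^ (s + 2) = a `^ s * (a * a).
    by rewrite powRD ?(gt_eqF a0) ?implybT // -[2]/(2%:R) powR_mulrn ?expr2 // ltW.
  by rewrite ler_pdivrMr ?mulr_gt0 // -a_pow theta_le_powR_sexp.
have uv : 1 + (u - 1) / (B - 1) * (a * B - 1) <= v.
  have -> : (u - 1) / (B - 1) * (a * B - 1) = (p - a) * (theta - a) / (theta - a * a).
    rewrite /u /B; field; rewrite mulN1r !subr_eq0.
    by rewrite (gt_eqF aa_lt) (gt_eqF theta_gt0) (gt_eqF r_gt0) (gt_eqF ra_lt).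
  have -> : v = 1 + (y - a) / a by rewrite /v mulrBl divff ?gt_eqF // addrC subrK.
  rewrite lerD2l ler_pdivrMr ?subr_gt0 // mulrAC ler_pdivlMr //.
  by rewrite mulrAC [_ * (theta - a * a)]mulrC ltW.
have u_gt0 : 0 < u by have /andP[u1 _] := uB; lra.
have v_gt0 : 0 < v by rewrite divr_gt0 //; lra.
have s_gt0 : 0 < s := lt_le_trans ltr01 (sexp_ge1 theta r).
have -> : p / y = u / v by rewrite /u /v invf_div mulrA divfK ?gt_eqF.
have -> : p = a * u by rewrite /u mulrC divfK ?gt_eqF.
exact: mul_powR_div_le a0 u_gt0 v_gt0 (powR_succ_le (ltW a0) s_gt0 B1 Ba uB uv).
Qed.

Lemma A1_ge_maxprice_calE {n} (pr : 'I_n -> R) y :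
  maxprice pr <= theta -> 1 <= y <= theta ->
  maxprice pr / a * calE (maxprice pr) y `^ s <= A1 theta r pr y.
Proof.
move=> p_le /andP[y1 yth]; have p1 := maxprice_ge1 pr.
set p := maxprice pr in p1 p_le *.
have a1 := rtheta_gt1; have a0 : 0 < a by lra.
have p0 : 0 < p by lra.
have y0 : 0 < y by lra.
have Es_le := calE_powR_le p0 y0 (sexp_ge1 theta r).
have Es_ge0 : 0 <= calE p y `^ s := powR_ge0 _ _.
have pa_ge0 : 0 <= p / a by rewrite divr_ge0 // ltW.
have [Phi1_le | lt_Phi1] := lerP (Phi1 theta r y) p.
  apply: le_trans (A1_ge_Phi1 _ Phi1_le); last by rewrite lt_max a1.
  have := ler_wpM2l pa_ge0 Es_le.
  have : p / a * calE p y <= y / a by rewrite mulrAC ler_pM2r ?invr_gt0 ?mul_calE_le.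
  have := div_rtheta_le_varphi yth.
  have : varphi theta r y <= Phi1 theta r y by rewrite le_max lexx orbT.
  lra.
rewrite A1_eq1 //; have [pa | ap] := lerP p a.
  rewrite -[1]mulr1 ler_pM // ?ler_pdivrMr ?mul1r //.
  exact: le_trans Es_le (calE_le1 p0 y0).
have p_lt : p < varphi theta r y by move: lt_Phi1; rewrite lt_max ltNge (ltW ap).
rewrite calE_lt ?(rejected_price_lt ap p_lt) // mulrAC ler_pdivrMr // mul1r.
exact: rejected_price_bound.
Qed.

End CompetitiveRatio.

Section Integration.
Context {d : measure_display} {T : measurableType d} {R : realType}.

Lemma measurable_threshold_payoff (I : Type) (P : T -> I -> R) (thr : T -> R)
    (idx : seq I) :
  (forall i, measurable_fun setT (fun w => P w i)) -> measurable_fun setT thr ->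
  measurable_fun setT (fun w => threshold_payoff (thr w) [seq P w i | i <- idx]).
Proof.
move=> mP mthr; elim: idx => [|i idx IH] /=; first exact: measurable_cst.
by apply: measurable_fun_ifT => //; apply: measurable_fun_ler.
Qed.

Lemma measurable_maxprice n (P : T -> 'I_n -> R) :
  (forall i, measurable_fun setT (fun w => P w i)) ->
  measurable_fun setT (fun w => maxprice (P w)).
Proof.
rewrite /maxprice => mP; elim: (index_enum _) => [|i idx IH].
  by under eq_fun do rewrite big_nil; exact: measurable_cst.
by under eq_fun do rewrite big_cons; exact: measurable_maxr.
Qed.

Lemma measurable_Phi1 (theta r : R) (Y : T -> R) : measurable_fun setT Y ->
  measurable_fun setT (fun w => Phi1 theta r (Y w)).
Proof.
move=> mY; apply: measurable_maxr; first exact: measurable_cst.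
apply: measurable_funD; first exact: measurable_cst.
apply: measurable_funM; first exact: measurable_cst.
by apply: measurable_funM => //; exact: measurable_cst.
Qed.

Lemma measurable_calE_powR (p e : R) (Y : T -> R) :
  measurable_fun setT Y -> (forall w, 0 < Y w) ->
  measurable_fun setT (fun w => calE p (Y w) `^ e).
Proof.
move=> mY Y_gt0.
(* Inversion is expressed through [powR], whose measurability is available. *)
have -> : (fun w => calE p (Y w) `^ e) =
    (fun w => Num.min (p * Y w `^ (-1)) (Y w / p) `^ e).
  by apply/funext => w; rewrite powRN powRr1 // ltW.
apply: measurableT_comp (measurable_powR e) _; apply: measurable_minr.
  apply: measurable_funM; first exact: measurable_cst.
  exact: measurableT_comp (measurable_powR _) mY.
by apply: measurable_funM => //; exact: measurable_cst.
Qed.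

Lemma bounded_ge0_integrable (mu : {finite_measure set T -> \bar R}) (f : T -> R) c :
  measurable_fun setT f -> (forall w, 0 <= f w <= c) ->
  mu.-integrable setT (EFin \o f).
Proof.
move=> mf f_bd; apply: measurable_bounded_integrable => //.
  by rewrite ltey_eq fin_num_measure.
exists c; split; first exact: num_real.
by move=> M cM w _ /=; have /andP[f0 fc] := f_bd w; rewrite ger0_norm //; lra.
Qed.

Lemma integrable_A1 (mu : {finite_measure set T -> \bar R}) (theta r c : R) n
    (P : T -> 'I_n -> R) (Y : T -> R) :
  (forall i, measurable_fun setT (fun w => P w i)) -> measurable_fun setT Y ->
  1 <= c -> (forall w i, 1 <= P w i <= c) ->
  mu.-integrable setT (EFin \o (fun w => A1 theta r (P w) (Y w))).
Proof.
move=> mP mY c1 P_bd; have one_in : (1 : R) <= 1 <= c by rewrite lexx.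
apply: (bounded_ge0_integrable mu (c := c)).
  exact: measurable_threshold_payoff (enum 'I_n) mP (measurable_Phi1 theta r mY).
move=> w; have /andP[A1_ge1 ->] := A1_in_itv theta r (Y w) one_in (P_bd w).
by rewrite (le_trans ler01 A1_ge1).
Qed.

Lemma Rintegral_ae_cst (mu : probability T R) (f : T -> R) c :
  measurable_fun setT f -> {ae mu, forall w, f w = c} -> \int[mu]_w f w = c.
Proof.
move=> mf f_ae.
transitivity (\int[mu]_(_ in setT) c); last first.
  by rewrite Rintegral_cst //; have /= -> := probability_setT mu; rewrite mulr1.
congr fine; apply: ae_eq_integral => //; first exact/measurable_EFinP.
by apply: filterS f_ae => w /= -> _.
Qed.

Lemma ae_ge0_le_Rintegral (mu : {measure set T -> \bar R}) (f g : T -> R) :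
  mu.-integrable setT (EFin \o f) -> mu.-integrable setT (EFin \o g) ->
  (forall w, 0 <= f w) -> (forall w, 0 <= g w) ->
  {ae mu, forall w, f w <= g w} -> \int[mu]_w f w <= \int[mu]_w g w.
Proof.
move=> if_ ig f_ge0 g_ge0 fg.
apply: fine_le; [exact: integrable_fin_num.. |].
apply: ae_ge0_le_integral => //.
- by move=> w _; rewrite lee_fin.
- exact: measurable_int if_.
- by move=> w _; rewrite lee_fin.
- exact: measurable_int ig.
- by apply: filterS fg => w fgw _; rewrite lee_fin.
Qed.

End Integration.

Theorem corollary1 (R : realType) (d : measure_display) (T : measurableType d)
    (mu : probability T R) (theta r : R) (n : nat)
    (P : T -> 'I_n.+1 -> R) (Y : T -> R) (pstar : R) :
  1 < theta ->
  theta^-1 < r -> r <= theta `^ (- 2^-1) ->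
  (forall i, measurable_fun setT (fun w => P w i)) ->
  measurable_fun setT Y ->
  (forall w i, 1 <= P w i <= theta) ->
  (forall w, 1 <= Y w <= theta) ->
  1 <= pstar <= theta ->
  {ae mu, forall w, maxprice (P w) = pstar} ->
  (\int[mu]_w A1 theta r (P w) (Y w)) / (\int[mu]_w maxprice (P w))
    >= (r * theta)^-1 * (\int[mu]_w (calE pstar (Y w)) `^ (sexp theta r)).
Proof.
move=> theta_gt1 r_gt r_le mP mY P_bd Y_bd /andP[pstar_ge1 pstar_le] max_ae.
have Y_gt0 w : 0 < Y w by have /andP[Y1 _] := Y_bd w; lra.
have pstar_gt0 : 0 < pstar by lra.
have c_ge0 : 0 <= pstar / (r * theta).
  by have a_gt1 := rtheta_gt1 theta_gt1 r_gt; rewrite divr_ge0 //; lra.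
have E_bd w := calE_powR_itv pstar_gt0 (Y_gt0 w) (sexp_ge1 theta r).
have mE := measurable_calE_powR pstar (sexp theta r) mY Y_gt0.
have A1_bd w : 1 <= A1 theta r (P w) (Y w) <= theta.
  by apply: A1_in_itv (P_bd w); rewrite lexx ltW.
rewrite (Rintegral_ae_cst (measurable_maxprice mP) max_ae) ler_pdivlMr //.
rewrite mulrAC [_^-1 * _]mulrC -RintegralZl //; last first.
  exact: bounded_ge0_integrable mE E_bd.
apply: ae_ge0_le_Rintegral.
- apply: (bounded_ge0_integrable mu (c := pstar / (r * theta))).
    by apply: measurable_funM => //; exact: measurable_cst.
  by move=> w; have /andP[E0 E1] := E_bd w; rewrite mulr_ge0 ?ler_piMr.
- exact: (integrable_A1 mu theta r mP mY (ltW theta_gt1) P_bd).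
- by move=> w; have /andP[E0 _] := E_bd w; rewrite mulr_ge0.
- by move=> w; have /andP[A1_ge1 _] := A1_bd w; lra.
- apply: filterS max_ae => w max_w; rewrite -max_w.
  by apply: A1_ge_maxprice_calE; rewrite ?max_w.
Qed.
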